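(* Let $f_\lambda$ be a probability density on $(0,\infty)$ with finite mean $\mu_\lambda$. Let $P_p$ be a probability distribution on $\{1,\dots,N\}$ with mean $E_p[n]=\sum_n n\,P_p(n)$, and for each $n$ let $g(\cdot\mid n)$ be a probability distribution on $\{0,1,\dots,N\}$ with mean $\overline{g}(n)=\sum_m m\,g(m\mid n)$. Consider random variables $(N_p,N_a,X,T)$ such that: $P\{N_p=n\}=\frac{n}{E_p[n]}P_p(n)$; conditionally on $N_p=n$, $N_a$ has distribution $g(\cdot\mid n)$; conditionally on $N_a=m$, $X$ is distributed as $\lambda_1+\dots+\lambda_m$ with $\lambda_1,\dots,\lambda_m$ i.i.d. with density $f_\lambda$ ($X=0$ if $m=0$); conditionally on $X=x$, $T$ is exponentially distributed with rate $x$ ($T=+\infty$ if $x=0$). Then for every $TTL\ge 0$, $$P\{T\le TTL\}\ \le\ 1-\frac{1}{E_p[n]}\,E_p\!\left[n\, e^{-\overline{g}(n)\,\mu_\lambda\,TTL}\right],$$ where $E_p[h(n)]=\sum_n h(n)P_p(n)$.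
   Context: This models the content access time $T$ of a random content request in an opportunistic network: $P_p(n)$ is the fraction of contents requested by exactly $n$ nodes (content popularity distribution), $g(m\mid n)$ is the probability that a content of popularity $n$ is held by $m$ nodes, $f_\lambda$ is the distribution of pairwise contact rates (inter-contact times exponential), and $X$ is the sum of contact rates between the requester and the holders; $P\{T\le TTL\}$ is the probability the content is accessed by deadline $TTL$. *)

From HB Require Import structures.
From mathcomp Require Import all_boot all_order all_algebra.
From mathcomp Require Import all_classical all_reals all_analysis.
Set Implicit Arguments. Unset Strict Implicit. Unset Printing Implicit Defensive.
Import Order.TTheory GRing.Theory Num.Theory.
Local Open Scope classical_set_scope.
Local Open Scope ring_scope.
Local Open Scope ereal_scope.

(* [sum_law f m h s] = E[ h(s + lambda_1 + ... + lambda_m) ] where the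
   lambda_i are i.i.d. with density f on (0,+oo): the law of the sum of m
   i.i.d. variables, written as the iterated (m-fold) Lebesgue integral
   against the product density f(l_1)...f(l_m). *)
Fixpoint sum_law (R : realType) (f : R -> R) (m : nat) (h : R -> \bar R)
    (s : R) : \bar R :=
  match m with
  | 0%N => h s
  | m'.+1 => \int[@lebesgue_measure R]_(l in `]0%R, +oo[)
               ((f l)%:E * sum_law f m' h (s + l)%R)
  end.

(* P{T <= t | X = x}: T exponential with rate x, T = +oo when x = 0. *)
Definition exp_cdf (R : realType) (x t : R) : R :=
  if (0 < x)%R then (1 - expR (- (x * t)))%R else 0%R.

Definition Ep_mean (R : realType) (N : nat) (Pp : nat -> R) : R :=
  (\sum_(1 <= n < N.+1) n%:R * Pp n)%R.

Definition gbar (R : realType) (N : nat) (g : nat -> nat -> R) (n : nat) : R :=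
  (\sum_(0 <= m < N.+1) m%:R * g m n)%R.

Definition prob_T_le (R : realType) (N : nat) (Pp : nat -> R)
    (g : nat -> nat -> R) (f : R -> R) (TTL : R) : \bar R :=
  \sum_(1 <= n < N.+1)
     ((n%:R * Pp n / Ep_mean N Pp)%R%:E *
      \sum_(0 <= m < N.+1)
         ((g m n)%:E * sum_law f m (fun x => (exp_cdf x TTL)%:E) 0%R)).

From HB Require Import structures.
From mathcomp Require Import all_boot all_order all_algebra.
From mathcomp Require Import all_classical all_reals all_analysis.
From mathcomp Require Import ring lra.
From mathcomp Require Import measurable_realfun.
Set Implicit Arguments.
Unset Strict Implicit.
Unset Printing Implicit Defensive.

Import Order.TTheory GRing.Theory Num.Theory.
Local Open Scope classical_set_scope.
Local Open Scope ring_scope.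

(* Given N_a = m, P{T <= TTL | X} = 1 - exp(-X TTL) is concave in X, hence
   below each of its tangent lines A + B X.  The expectation of such an affine
   function of X = lambda_1 + ... + lambda_m is A + B m mu, and averaging over
   m ~ g(.|n) gives A + B gbar(n) mu.  Taking the tangent at X = gbar(n) mu
   turns this into 1 - exp(-gbar(n) mu TTL) (Jensen's inequality), and
   averaging over the size-biased N_p yields the bound. *)

(* Unlike [ge0_le_integral], no measurability is assumed: the iterated
   integrals [sum_law] are not known to be measurable. *)
Lemma ge0_le_integral_nomeas d (T : measurableType d) (R : realType)
    (mu : {measure set T -> \bar R}) (D : set T) (f1 f2 : T -> \bar R) :
  (forall x, D x -> (0 <= f1 x)%E) -> (forall x, D x -> (f1 x <= f2 x)%E) ->
  (\int[mu]_(x in D) f1 x <= \int[mu]_(x in D) f2 x)%E.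
Proof.
move=> f10 f12.
have f20 x : D x -> (0 <= f2 x)%E.
  by move=> Dx; exact: le_trans (f10 x Dx) (f12 x Dx).
rewrite !ge0_integralE//; apply: ereal_sup_le => _ [h /= hle <-].
by exists h => //= x; apply: le_trans (hle x) _; exact: lee_restrict.
Qed.

Section sum_law_affine.
Variables (R : realType) (f : R -> R) (mu : R).
Hypothesis f_meas : measurable_fun (`]0%R, +oo[ : set R) f.
Hypothesis f_ge0 : forall x, 0 < x -> 0 <= f x.
Hypothesis f_int1 :
  (\int[@lebesgue_measure R]_(x in `]0%R, +oo[) (f x)%:E = 1)%E.
Hypothesis f_mean :
  (\int[@lebesgue_measure R]_(x in `]0%R, +oo[) (x * f x)%:E = mu%:E)%E.

Let xf_ge0 x : `]0%R, +oo[%classic x -> 0 <= x * f x.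
Proof. by rewrite /= in_itv /= andbT => x0; rewrite mulr_ge0 ?f_ge0 ?ltW. Qed.

Lemma density_mean_ge0 : 0 <= mu.
Proof.
rewrite -lee_fin -f_mean; apply: integral_ge0 => x /xf_ge0.
by rewrite lee_fin.
Qed.

Lemma integral_density_affine (a b : R) : 0 <= a -> 0 <= b ->
  (\int[@lebesgue_measure R]_(l in `]0%R, +oo[) (a * f l + b * (l * f l))%:E
   = (a + b * mu)%:E)%E.
Proof.
move=> a0 b0.
under eq_integral do rewrite EFinD [(a * _)%:E]EFinM [(b * _)%:E]EFinM.
have fl0 l : `]0%R, +oo[%classic l -> (0 <= (f l)%:E)%E.
  by rewrite /= in_itv /= andbT lee_fin => /f_ge0.
rewrite ge0_integralD //; first last.
- by apply/measurable_EFinP; do 2 apply: measurable_funM => //.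
- by move=> l /xf_ge0 ?; rewrite mule_ge0 ?lee_fin.
- by apply/measurable_EFinP; apply: measurable_funM.
- by move=> l /fl0 ?; rewrite mule_ge0 ?lee_fin.
rewrite ge0_integralZl_EFin //; last exact/measurable_EFinP.
rewrite ge0_integralZl_EFin //; last first.
  by apply/measurable_EFinP; apply: measurable_funM.
by rewrite f_int1 f_mean mule1 -EFinM -EFinD.
Qed.

Lemma sum_law_ge0 m (h : R -> \bar R) s :
  (forall x, (0 <= h x)%E) -> (0 <= sum_law f m h s)%E.
Proof.
move=> h0; elim: m s => [|m IH] s /=; first exact: h0.
apply: integral_ge0 => l; rewrite /= in_itv /= andbT => l0.
by rewrite mule_ge0 // lee_fin f_ge0.
Qed.

Lemma sum_law_le_affine (A B : R) (h : R -> \bar R) :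
    0 <= A -> 0 <= B -> (forall x, (0 <= h x)%E) ->
    (forall x, 0 <= x -> (h x <= (A + B * x)%:E)%E) ->
  forall m s, 0 <= s -> (sum_law f m h s <= (A + B * (s + m%:R * mu))%:E)%E.
Proof.
move=> A0 B0 h0 hle; elim=> [|m IH] s s0 /=; first by rewrite mul0r addr0 hle.
have C0 : 0 <= A + B * (s + m%:R * mu).
  by rewrite addr_ge0 ?mulr_ge0 ?addr_ge0 ?mulr_ge0 ?density_mean_ge0.
apply: (@le_trans _ _ (\int[@lebesgue_measure R]_(l in `]0%R, +oo[)
  ((A + B * (s + m%:R * mu)) * f l + B * (l * f l))%:E)%E); last first.
  rewrite integral_density_affine // lee_fin -[m.+1]addn1 natrD.
  by rewrite le_eqVlt; apply/predU1l; ring.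
apply: ge0_le_integral_nomeas.
- move=> l; rewrite /= in_itv /= andbT => l0.
  by rewrite mule_ge0 ?sum_law_ge0 // lee_fin f_ge0.
- move=> l; rewrite /= in_itv /= andbT => l0.
  apply: le_trans (lee_wpmul2l _ (IH (s + l) _)) _.
  + by rewrite lee_fin f_ge0.
  + by rewrite addr_ge0 // ltW.
  by rewrite -EFinM lee_fin le_eqVlt; apply/predU1l; ring.
Qed.

End sum_law_affine.

Lemma expR_tangent_le (R : realType) (c y : R) : expR c * (1 + y - c) <= expR y.
Proof.
have -> : expR y = expR c * expR (y - c) by rewrite -expRD; congr expR; ring.
by rewrite ler_wpM2l ?expR_ge0 // -addrA expR_ge1Dx.
Qed.

Lemma exp_cdf_ge0 (R : realType) (x t : R) : 0 <= t -> 0 <= exp_cdf x t.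
Proof.
move=> t0; rewrite /exp_cdf; case: ifP => // /ltW x0.
by rewrite subr_ge0 expR_le1 oppr_le0 mulr_ge0.
Qed.

(* At [x = 0], where [exp_cdf 0 t = 0], the bound is [expR c * (1 - c) <= 1]. *)
Lemma exp_cdf_le_tangent (R : realType) (x t c : R) : 0 <= t -> 0 <= x ->
  exp_cdf x t <= 1 - expR c * (1 - c) + expR c * t * x.
Proof.
move=> t0 x0; have := expR_tangent_le c 0; rewrite expR0 addr0 => tangent0.
rewrite /exp_cdf; case: ifP => _; last first.
  have : 0 <= expR c * t * x by rewrite !mulr_ge0 ?expR_ge0.
  lra.
have := expR_tangent_le c (- (x * t)).
have -> : expR c * (1 + - (x * t) - c) = expR c * (1 - c) - expR c * t * x.
  by ring.
lra.
Qed.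

Section size_biased_mixture.
Variables (R : realType) (N : nat) (Pp : nat -> R) (g : nat -> nat -> R).
Hypothesis Pp_ge0 : forall n, (1 <= n <= N)%N -> 0 <= Pp n.
Hypothesis Pp_sum1 : \sum_(1 <= n < N.+1) Pp n = 1.

Lemma Ep_mean_ge1 : 1 <= Ep_mean N Pp.
Proof.
rewrite -Pp_sum1 /Ep_mean big_nat_cond [leRHS]big_nat_cond.
apply: ler_sum => n /andP[/andP[n1 nN] _].
by rewrite ler_peMl ?Pp_ge0 ?n1 // ler1n.
Qed.

Lemma Ep_mean_gt0 : 0 < Ep_mean N Pp.
Proof. exact: lt_le_trans Ep_mean_ge1. Qed.

Lemma size_biased_mean_complement (h : nat -> R) :
  \sum_(1 <= n < N.+1) n%:R * Pp n / Ep_mean N Pp * (1 - h n)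
  = 1 - (Ep_mean N Pp)^-1 * \sum_(1 <= n < N.+1) n%:R * h n * Pp n.
Proof.
under eq_bigr do rewrite mulrBr mulr1.
rewrite sumrB -mulr_suml mulr_sumr -/(Ep_mean N Pp).
rewrite mulfV ?gt_eqF ?Ep_mean_gt0 //.
by congr (_ - _); apply: eq_bigr => n _; ring.
Qed.

Lemma mixture_affine n (A B mu : R) :
  \sum_(0 <= m < N.+1) g m n = 1 ->
  \sum_(0 <= m < N.+1) g m n * (A + B * (m%:R * mu))
  = A + B * (gbar N g n * mu).
Proof.
move=> g1.
rewrite (eq_bigr (fun m => A * g m n + (B * mu) * (m%:R * g m n))); last first.
  by move=> m _; ring.
by rewrite big_split /= -!mulr_sumr g1 -/(gbar N g n); ring.
Qed.

End size_biased_mixture.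

Lemma prob_T_le_le_affine (R : realType) (f : R -> R) (mu : R) (N : nat)
    (Pp : nat -> R) (g : nat -> nat -> R) (TTL : R) (A B : nat -> R)
    (f_meas : measurable_fun (`]0%R, +oo[ : set R) f)
    (f_ge0 : forall x, 0 < x -> 0 <= f x)
    (f_int1 : (\int[@lebesgue_measure R]_(x in `]0%R, +oo[) (f x)%:E = 1)%E)
    (f_mean : (\int[@lebesgue_measure R]_(x in `]0%R, +oo[) (x * f x)%:E
                 = mu%:E)%E)
    (Pp_ge0 : forall n, (1 <= n <= N)%N -> 0 <= Pp n)
    (Pp_sum1 : \sum_(1 <= n < N.+1) Pp n = 1)
    (g_ge0 : forall n m, (1 <= n <= N)%N -> (m <= N)%N -> 0 <= g m n)
    (TTL_ge0 : 0 <= TTL) (A_ge0 : forall n, 0 <= A n)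
    (B_ge0 : forall n, 0 <= B n)
    (cdf_le : forall n x, 0 <= x -> exp_cdf x TTL <= A n + B n * x) :
  (prob_T_le N Pp g f TTL <=
   (\sum_(1 <= n < N.+1) n%:R * Pp n / Ep_mean N Pp *
      \sum_(0 <= m < N.+1) g m n * (A n + B n * (m%:R * mu)))%:E)%E.
Proof.
apply: (@le_trans _ _ (\sum_(1 <= n < N.+1) ((n%:R * Pp n / Ep_mean N Pp)%:E *
    \sum_(0 <= m < N.+1) ((g m n)%:E * (A n + B n * (m%:R * mu))%:E)))%E);
  last first.
  under eq_bigr do under eq_bigr do rewrite -EFinM.
  by under eq_bigr do rewrite sumEFin -EFinM; rewrite sumEFin.
rewrite /prob_T_le big_nat_cond [leRHS]big_nat_cond.
apply: lee_sum => n /andP[/andP[n1 nN] _].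
have nN' : (1 <= n <= N)%N by rewrite n1 -ltnS.
apply: lee_wpmul2l.
  by rewrite lee_fin !mulr_ge0 ?Pp_ge0 // invr_ge0 ltW ?Ep_mean_gt0.
rewrite big_nat_cond [leRHS]big_nat_cond.
apply: lee_sum => m /andP[/andP[_ mN] _].
apply: lee_wpmul2l; first by rewrite lee_fin g_ge0.
rewrite -[m%:R * mu]add0r.
apply: sum_law_le_affine => // x.
  by rewrite lee_fin exp_cdf_ge0.
by move=> x0; rewrite lee_fin cdf_le.
Qed.

Theorem theorem2 (R : realType) (f : R -> R) (mu : R) (N : nat)
    (Pp : nat -> R) (g : nat -> nat -> R) (TTL : R)
    (* f is a probability density on (0, +oo) with finite mean mu *)
    (f_meas : measurable_fun (`]0%R, +oo[ : set R) f)
    (f_ge0 : forall x, 0 < x -> 0 <= f x)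
    (f_int1 : (\int[@lebesgue_measure R]_(x in `]0%R, +oo[) (f x)%:E = 1)%E)
    (f_mean : (\int[@lebesgue_measure R]_(x in `]0%R, +oo[) (x * f x)%:E
                 = mu%:E)%E)
    (* P_p is a probability distribution on {1, ..., N} *)
    (Pp_ge0 : forall n, (1 <= n <= N)%N -> 0 <= Pp n)
    (Pp_sum1 : \sum_(1 <= n < N.+1) Pp n = 1)
    (* each g(. | n) is a probability distribution on {0, ..., N} *)
    (g_ge0 : forall n m, (1 <= n <= N)%N -> (m <= N)%N -> 0 <= g m n)
    (g_sum1 : forall n, (1 <= n <= N)%N -> \sum_(0 <= m < N.+1) g m n = 1)
    (TTL_ge0 : 0 <= TTL) :
  (prob_T_le N Pp g f TTL <=
   (1 - (Ep_mean N Pp)^-1 *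
        \sum_(1 <= n < N.+1)
           n%:R * expR (- (gbar N g n * mu * TTL)) * Pp n)%:E)%E.
Proof.
pose c n := - (gbar N g n * mu * TTL).
pose A n := 1 - expR (c n) * (1 - c n).
pose B n := expR (c n) * TTL.
have A_ge0 n : 0 <= A n.
  by have := expR_tangent_le (c n) 0; rewrite expR0 addr0 /A subr_ge0.
have B_ge0 n : 0 <= B n by rewrite mulr_ge0 ?expR_ge0.
have cdf_le n x : 0 <= x -> exp_cdf x TTL <= A n + B n * x.
  exact: exp_cdf_le_tangent.
apply: le_trans (prob_T_le_le_affine f_meas f_ge0 f_int1 f_mean Pp_ge0 Pp_sum1
  g_ge0 TTL_ge0 A_ge0 B_ge0 cdf_le) _.
rewrite lee_fin -(size_biased_mean_complement Pp_ge0 Pp_sum1) le_eqVlt.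
apply/predU1l; rewrite !big_nat; apply: eq_bigr => n nN.
by rewrite mixture_affine ?g_sum1 // /A /B /c; ring.
Qed.
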